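(* Let $G=D_{2n}$ be the dihedral group of order $2n$ with $n$ odd, and let $\mathcal{C}\subseteq G\setminus\{1\}$ be a subset closed under conjugation by $G$ which generates $G$. Then $K_{\mathcal{C}}$ is non-degenerate.
   Context: For a finite group $G$ and a subset $\mathcal{C}\subseteq G\setminus\{1\}$ closed under conjugation, the Killing form $K_{\mathcal{C}}$ is the bilinear form on the complex vector space with basis $\mathcal{C}$ given on basis elements by $K_{\mathcal{C}}(a,b)=|C_G(ab)\cap\mathcal{C}|$; it is non-degenerate if the matrix $(K_{\mathcal{C}}(a,b))_{a,b\in\mathcal{C}}$ is invertible. *)

From mathcomp Require Import all_boot all_order all_algebra all_fingroup all_solvable all_field.
Set Implicit Arguments. Unset Strict Implicit. Unset Printing Implicit Defensive.
Local Open Scope ring_scope.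

Definition killing_mx (gT : finGroupType) (G : {group gT}) (C : {set gT})
  : 'M[algC]_#|C| :=
  \matrix_(i < #|C|, j < #|C|)
    (#|('C_G[(enum_val i * enum_val j)%g] :&: C)%g|)%:R.

Definition killing_nondegenerate (gT : finGroupType) (G : {group gT})
  (C : {set gT}) : bool := killing_mx G C \in unitmx.

From mathcomp Require Import all_boot all_order all_algebra all_fingroup all_solvable all_field.
From mathcomp Require Import ring zify.
Set Implicit Arguments. Unset Strict Implicit. Unset Printing Implicit Defensive.
Import GRing.Theory Num.Theory.
Local Open Scope ring_scope.

(* Let X be the rotation subgroup, of odd order n.  A nontrivial rotation has
   centraliser X, a reflection c has centraliser {1, c}, and all reflections
   are conjugate; since C generates G it contains a reflection, hence all of
   them.  So K_C(a, b) is |C| if ab = 1, |C :&: X| if a and b lie on the same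
   side of X, and 1 otherwise.  Summing the equations of a left null vector w
   over each side gives a nonsingular 2x2 system for the two side sums of w;
   both vanish, and the equation at b then reads |C :\: X| w(b^-1) = 0. *)

Section OddOrder.
Local Open Scope group_scope.
Variables (gT : finGroupType) (X : {group gT}).
Hypothesis oddX : odd #|X|.

Lemma odd_expg2K : {in X, cancel (natexp^~ 2) (natexp^~ (expg_invn X 2))}.
Proof. by apply: expgK; rewrite coprimen2. Qed.

Lemma odd_invg_eq1 a : a \in X -> a^-1 = a -> a = 1.
Proof.
move=> Xa aV; rewrite -(odd_expg2K Xa) expgS expg1 -{1}aV mulVg.
exact: expg1n.
Qed.

Lemma odd_sqrtg c : c \in X -> exists2 a, a \in X & a ^+ 2 = c.
Proof.
move=> Xc; exists (c ^+ expg_invn X 2); first exact: groupX.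
by rewrite expgAC odd_expg2K.
Qed.

End OddOrder.

Lemma sum_invg_closed (R : nmodType) (gT : finGroupType) (D : {set gT}) (F : gT -> R) :
  {in D, forall b, (b^-1)%g \in D} -> \sum_(b in D) F (b^-1)%g = \sum_(b in D) F b.
Proof.
move=> invD; rewrite [RHS](reindex_inj invg_inj); apply: eq_bigl => b.
by apply/idP/idP => /invD; rewrite ?invgK.
Qed.

Lemma unitmx_enum_left_kernel (F : fieldType) (T : finType) (A : {set T}) (k : T -> T -> F) :
  (forall w : T -> F, {in A, forall b, \sum_(a in A) w a * k a b = 0} ->
     {in A, forall a, w a = 0}) ->
  (\matrix_(i < #|A|, j < #|A|) k (enum_val i) (enum_val j)) \in unitmx.
Proof.
move=> kerA; rewrite unitmxE unitfE; apply/negP => /det0P[v v_neq0 vA].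
case/eqP: v_neq0; apply/rowP => i; rewrite mxE.
pose w a := v ord0 (enum_rank_in (enum_valP i) a).
have := kerA w _ (enum_val i) (enum_valP i); rewrite /w enum_valK_in; apply => b Ab.
have := congr1 (fun u : 'rV_#|A| => u ord0 (enum_rank_in (enum_valP i) b)) vA.
rewrite !mxE => e; rewrite -[in RHS]e big_enum_val /=; apply: eq_bigr => j _.
by rewrite enum_valK_in mxE enum_rankK_in.
Qed.

Definition dihedral_killing (gT : finGroupType) (C X : {set gT}) (a b : gT) : nat :=
  if (a * b == 1)%g then #|C| else if (a \in X) == (b \in X) then #|C :&: X| else 1.

Section DihedralKillingKernel.
Variables (R : numDomainType) (gT : finGroupType) (C : {set gT}) (X : {group gT}).

Lemma side_system_eq0 (m r : nat) (x y : R) : (0 < r)%N ->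
  m.+1%:R * y + x = 0 -> m%:R * (m%:R * x + y) + r%:R * x = 0 -> x = 0 /\ y = 0.
Proof.
move=> r_gt0 e1 e2.
have ex : x = - (m.+1%:R * y) by apply/eqP; rewrite -addr_eq0 addrC e1.
suff y0 : y = 0 by rewrite ex y0 mulr0 oppr0.
have ey : (m * (m * m.+1) + r * m.+1)%N%:R * y = m%:R * y.
  by apply/eqP; rewrite -subr_eq0 -oppr_eq0 -e2 ex !natrD !natrM; apply/eqP; ring.
have [// | y_neq0] := eqVneq y 0.
by move/(mulIf y_neq0)/eqP: ey; rewrite eqr_nat => /eqP; nia.
Qed.

Hypothesis invC : {in C, forall b, (b^-1)%g \in C}.
Variable w : gT -> R.

Let m := #|C :&: X|.
Let r := #|C :\: X|.
Let side (s : bool) := [set a in C | (a \in X) == s].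
Let S s := \sum_(a in side s) w a.

Let card_side s : #|side s| = if s then m else r.
Proof. by case: s; apply: eq_card => a; rewrite !inE ?eqbF_neg ?eqb_id andbC. Qed.

Let sum_sides s (F : gT -> R) :
  \sum_(a in C) F a = \sum_(a in side s) F a + \sum_(a in side (~~ s)) F a.
Proof.
rewrite (bigID (fun a => (a \in X) == s)) /=; congr (_ + _); apply: eq_bigl => a.
  by rewrite !inE.
by rewrite !inE; case: (a \in X); case: s.
Qed.

Let side_invg s : {in side s, forall b, (b^-1)%g \in side s}.
Proof. by move=> b /setIdP[Cb bX]; rewrite inE invC // groupV. Qed.

Lemma killing_col_sum b : b \in C ->
  \sum_(a in C) w a * (dihedral_killing C X a b)%:R =
    m%:R * S (b \in X) + S (~~ (b \in X)) + r%:R * w (b^-1)%g.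
Proof.
move=> Cb; rewrite (sum_sides (b \in X)) addrAC; congr (_ + _).
  have /side_invg Vb : b \in side (b \in X) by rewrite inE Cb eqxx.
  rewrite (eq_bigr (fun a => m%:R * w a + r%:R * (w a * (a == b^-1)%g%:R))); last first.
    move=> a /setIdP[_ /eqP aX]; rewrite /dihedral_killing mulg_eq1 aX eqxx.
    by case: eqP => _; rewrite -?(cardsID X C) ?natrD /=; ring.
  rewrite big_split /= -!mulr_sumr; congr (_ + _ * _).
  rewrite (bigD1 b^-1%g) //= eqxx mulr1.
  by rewrite big1 ?addr0 // => a /andP[_ /negbTE ->]; rewrite mulr0.
apply: eq_bigr => a /setIdP[_ /eqP aX]; rewrite /dihedral_killing mulg_eq1 aX.
by move: aX; case: eqP => [-> | _]; rewrite ?groupV; case: (b \in X); rewrite ?mulr1.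
Qed.

Hypothesis kerw : {in C, forall b, \sum_(a in C) w a * (dihedral_killing C X a b)%:R = 0}.

Lemma sum_side_killing_eq0 s : #|side s|%:R * (m%:R * S s + S (~~ s)) + r%:R * S s = 0.
Proof.
have : \sum_(b in side s) \sum_(a in C) w a * (dihedral_killing C X a b)%:R = 0.
  by apply: big1 => b /setIdP[Cb _]; exact: kerw.
rewrite (eq_bigr (fun b => m%:R * S s + S (~~ s) + r%:R * w (b^-1)%g)); last first.
  by move=> b /setIdP[Cb /eqP <-]; exact: killing_col_sum.
rewrite big_split /= sumr_const -mulr_sumr (sum_invg_closed _ (@side_invg s)).
by move=> <-; rewrite mulr_natl.
Qed.

Lemma dihedral_killing_kernel_eq0 : (0 < r)%N -> {in C, forall a, w a = 0}.
Proof.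
move=> r_gt0 a Ca.
have r_neq0 : r%:R != 0 :> R by rewrite pnatr_eq0 -lt0n.
have [ST0 SF0] : S true = 0 /\ S false = 0.
  apply: (side_system_eq0 (m := m) r_gt0); last first.
    by have := sum_side_killing_eq0 true; rewrite card_side.
  move/eqP: (sum_side_killing_eq0 false); rewrite card_side -mulrDr mulf_eq0 (negbTE r_neq0).
  by move/eqP <-; rewrite mulrSr mulrDl mul1r addrAC.
have S0 s : S s = 0 by case: s.
move/eqP: (kerw (invC Ca)); rewrite killing_col_sum ?invC // invgK !S0 mulr0 !add0r.
by rewrite mulf_eq0 (negbTE r_neq0) => /eqP.
Qed.

End DihedralKillingKernel.

Section GeneralizedDihedral.
Local Open Scope group_scope.
Variables (gT : finGroupType) (G X : {group gT}) (y : gT).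
Hypotheses (sXG : X \subset G) (abX : abelian X) (oddX : odd #|X|).
Hypotheses (y2 : y ^+ 2 = 1) (yinvX : {in X, forall a, a ^ y = a^-1}).
Hypothesis outsideXy : G :\: X \subset X :* y.

Lemma outside_inverts g : g \in G :\: X -> {in X, forall b, b ^ g = b^-1}.
Proof.
move=> /(subsetP outsideXy)/rcosetP[a Xa ->] b Xb.
by rewrite conjgM [b ^ a]conjgE -(centsP abX a Xa b Xb) mulKg yinvX.
Qed.

Lemma outside_mul g h : g \in G :\: X -> h \in G :\: X -> g * h \in X.
Proof.
move=> /(subsetP outsideXy)/rcosetP[a Xa ->] /(subsetP outsideXy)/rcosetP[b Xb ->].
have yV : y^-1 = y by rewrite -[y^-1]mulg1 -y2 expgS expg1 mulKg.
by rewrite -mulgA mulgA -{1}yV -mulgA -/(conjg b y) yinvX // groupM ?groupV.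
Qed.

Lemma outside_invg g : g \in G :\: X -> g^-1 = g.
Proof.
move=> DXg; have Xgg := outside_mul DXg DXg.
apply/eqP; rewrite eq_invg_mul; apply/eqP/(odd_invg_eq1 oddX Xgg).
by rewrite -(outside_inverts DXg Xgg) conjgE -mulgA mulKg.
Qed.

Lemma mem_mul_side a b : a \in G -> b \in G -> (a * b \in X) = ((a \in X) == (b \in X)).
Proof.
move=> Ga Gb; have [Xa | nXa] := boolP (a \in X); first by rewrite groupMl.
have [Xb | nXb] := boolP (b \in X); first by rewrite groupMr // (negbTE nXa).
by rewrite outside_mul ?inE ?nXa ?nXb.
Qed.

Lemma cent1_inside c : c \in X -> c != 1 -> 'C_G[c] = X.
Proof.
move=> Xc c_neq1; apply/setP => g; rewrite inE cent1E.
have [Xg | nXg] := boolP (g \in X).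
  by rewrite (subsetP sXG) //= (centsP abX g Xg c Xc) eqxx.
apply/andP => -[Gg /eqP gc]; case/eqP: c_neq1; apply: (odd_invg_eq1 oddX Xc).
have DXg : g \in G :\: X by rewrite inE nXg.
by rewrite -(outside_inverts DXg Xc) conjgE -gc mulKg.
Qed.

Lemma cent1_outside c : c \in G :\: X -> 'C_G[c] = [set 1; c].
Proof.
move=> DXc; have /setDP[Gc nXc] := DXc.
apply/eqP; rewrite eqEsubset; apply/andP; split; last first.
  by rewrite subUset !sub1set !in_setI group1 Gc !cent1E mul1g mulg1 !eqxx.
apply/subsetP => g /setIP[Gg]; rewrite cent1E => /eqP cg; rewrite !inE.
have [Xg | nXg] := boolP (g \in X).
  apply/orP; left; apply/eqP/(odd_invg_eq1 oddX Xg).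
  by rewrite -(outside_inverts DXc Xg) conjgE cg mulKg.
have DXg : g \in G :\: X by rewrite inE nXg.
have Xgc := outside_mul DXg DXc.
suff /eqP : g * c = 1 by rewrite mulg_eq1 (outside_invg DXc) => ->; rewrite orbT.
apply: (odd_invg_eq1 oddX Xgc).
by rewrite -(outside_inverts DXc Xgc) conjgE {1}cg -mulgA mulKg.
Qed.

Lemma outside_conjugate t u :
  t \in G :\: X -> u \in G :\: X -> exists2 a, a \in X & u = t ^ a.
Proof.
(* t ^ a = a^-2 * t, and squaring is onto X since X has odd order. *)
move=> DXt DXu; have [a Xa a2] := odd_sqrtg oddX (groupVr (outside_mul DXu DXt)).
exists a => //; rewrite conjgE.
have ta : t * a = a^-1 * t.
  by rewrite conjgCV (outside_invg DXt) (outside_inverts DXt Xa).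
rewrite ta mulgA -invMg -[a * a]/(a ^+ 2) a2 invgK.
by rewrite -{2}(outside_invg DXt) mulgK.
Qed.

Variables (C : {set gT}) (t : gT).
Hypotheses (sCG1 : C \subset G :\ 1) (conjC : forall x g, x \in C -> g \in G -> x ^ g \in C).
Hypotheses (Ct : t \in C) (nXt : t \notin X).

Let sCG : C \subset G := subset_trans sCG1 (subD1set G 1).

Lemma outside_subset : G :\: X \subset C.
Proof.
have DXt : t \in G :\: X by rewrite inE nXt (subsetP sCG).
apply/subsetP => u /(outside_conjugate DXt)[a Xa ->].
exact: conjC Ct (subsetP sXG a Xa).
Qed.

Lemma killing_invg_closed : {in C, forall b, b^-1 \in C}.
Proof.
move=> b Cb; have Gb := subsetP sCG b Cb.
have [Xb | nXb] := boolP (b \in X); last by rewrite outside_invg ?inE ?nXb.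
have DXt : t \in G :\: X by rewrite inE nXt (subsetP sCG).
by rewrite -(outside_inverts DXt Xb) conjC ?(subsetP sCG).
Qed.

Lemma card_cent1_killing c : c \in G ->
  #|'C_G[c] :&: C| = if c == 1 then #|C| else if c \in X then #|C :&: X| else 1%N.
Proof.
move=> Gc; have [-> | c_neq1] := eqVneq c 1.
  by rewrite cent11T setIT (setIidPr sCG).
have [Xc | nXc] := boolP (c \in X); first by rewrite cent1_inside // setIC.
have DXc : c \in G :\: X by rewrite inE nXc.
have C'1 : 1 \notin C by apply/negP => /(subsetP sCG1); rewrite !inE eqxx.
rewrite cent1_outside // setIUl (disjoint_setI0 _) ?disjoints1 // set0U.
by rewrite (setIidPl _) ?cards1 // sub1set (subsetP outside_subset).
Qed.

Lemma card_cent1_mul_killing a b : a \in C -> b \in C ->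
  #|'C_G[a * b] :&: C| = dihedral_killing C X a b.
Proof.
move=> /(subsetP sCG) Ga /(subsetP sCG) Gb.
by rewrite /dihedral_killing card_cent1_killing ?mem_mul_side ?groupM.
Qed.

End GeneralizedDihedral.

Section DihedralPresentation.
Local Open Scope group_scope.

Lemma dihedral_outside_coset (gT : finGroupType) (G : {group gT}) (x y : gT) :
  <[x]> <*> <[y]> = G -> y ^+ 2 = 1 -> x ^ y = x^-1 -> G :\: <[x]> \subset <[x]> :* y.
Proof.
move=> defG y2 xy.
have nXy : <[y]> \subset 'N(<[x]>).
  by rewrite cycle_subG; apply/normP; rewrite -cycleJ xy cycleV.
apply/subsetP => g /setDP[]; rewrite -defG norm_joinEr //.
move=> /mulsgP[a _ Xa /cycleP[k ->] ->]; rewrite -(expg_mod k y2).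
have : (k %% 2 < 2)%N by rewrite ltn_mod.
case: (k %% 2)%N => [|[|//]] _; first by rewrite expg0 mulg1 Xa.
by move=> _; apply/rcosetP; exists a.
Qed.

End DihedralPresentation.

Local Close Scope ring_scope.

Theorem theorem9p1 (gT : finGroupType) (G : {group gT}) (n : nat) (C : {set gT}) :
  (1 < n)%N -> odd n ->
  G \isog 'D_(n.*2) ->
  (C \subset G :\ 1%g) ->
  (forall x g, x \in C -> g \in G -> (x ^ g)%g \in C) ->
  <<C>>%g = G :> {set gT} ->
  killing_nondegenerate G C.
Proof.
move=> n_gt1 odd_n /(isoGrpP G (Grp_dihedral n_gt1))[oG homG] sCG1 conjC genC.
case/existsP: homG => -[x y] /eqP[defG xn y2 xy]; rewrite card_dihedral // in oG.
pose X := <[x]>%G.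
have sXG : X \subset G by rewrite -defG joing_subl.
have oX : #|X| %| n by rewrite -orderE order_dvdn xn.
have yinvX : {in X, forall a, (a ^ y = a^-1)%g}.
  by move=> _ /cycleP[i ->]; rewrite conjXg xy expVgn.
have DXy := dihedral_outside_coset defG y2 xy.
have [t CXt] : exists t, t \in C :\: X.
  apply/set0Pn; rewrite setD_eq0; apply/negP => sCX.
  have : #|G| <= #|X| by rewrite -genC subset_leq_card // gen_subG.
  by have := dvdn_leq (ltnW n_gt1) oX; rewrite oG -addnn; lia.
have /setDP[Ct nXt] := CXt.
have oddX : odd #|X| := dvdn_odd oX odd_n.
have abX : abelian X := cycle_abelian x.
have invC := killing_invg_closed abX oddX y2 yinvX DXy sCG1 conjC Ct nXt.
rewrite /killing_nondegenerate /killing_mx.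
pose k a b := (#|'C_G[a * b]%g :&: C|)%:R%R : algC.
apply: (@unitmx_enum_left_kernel _ _ C k) => w kerw.
have r_gt0 : 0 < #|C :\: X| by apply/card_gt0P; exists t.
apply: (dihedral_killing_kernel_eq0 invC _ r_gt0).
move=> b Cb; rewrite -[RHS](kerw b Cb); apply: eq_bigr => a Ca.
by rewrite /k (card_cent1_mul_killing sXG abX oddX y2 yinvX DXy sCG1 conjC Ct nXt).
Qed.
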